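(* For every positive integer $\alpha$, there is no function $f$ such that $\mathrm{ecrw}_\alpha(G)\le f(\mathrm{tcw}(G))$ for all graphs $G$. (Indeed, for every $k$ the graph $G^{\alpha+1}_k$ has tree-cut width at most $\alpha+1$, while $\{G^{\alpha+1}_k:k\in\mathbb N\}$ has unbounded $\alpha$-edge-crossing width.)
   Context: For positive integers $n,k$, the graph $G^n_k$ has vertex set $A\cup B_k$ where $A=\{a_1,\dots,a_n\}$ and $B_k=\{(W,\ell): W\subseteq A,\ |W|=2,\ \ell\in[k]\}$, with $a\in A$ adjacent to $(W,\ell)$ iff $a\in W$, and no other edges. A tree-cut decomposition of a graph $G$ is a pair $\mathcal{T}=(T,\{X_t\}_{t\in V(T)})$ where $T$ is a tree and the bags $X_t\subseteq V(G)$ are pairwise disjoint (possibly empty) with $\bigcup_{t\in V(T)}X_t=V(G)$. For a node $t$ of $T$, let $T_1,\dots,T_m$ be the connected components of $T-t$ and $Z_i=\bigcup_{s\in V(T_i)}X_s$; $\mathrm{cross}_{\mathcal{T}}(t)$ is the number of edges of $G$ whose two endpoints lie in two distinct sets among $Z_1,\dots,Z_m$ (if $T$ has one node, $\mathrm{cross}_{\mathcal T}(t)=0$). The crossing number of $\mathcal{T}$ is $\max_{t}\mathrm{cross}_{\mathcal{T}}(t)$, and the thickness of $\mathcal{T}$ is $\max_t|X_t|$. $\mathrm{ecrw}_\alpha(G)$ is the minimum crossing number over tree-cut decompositions of $G$ of thickness at most $\alpha$. For an edge $uv$ of $T$, the adhesion $\mathrm{adh}_{\mathcal T}(uv)$ is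 the set of edges of $G$ joining $\bigcup_{s\in V(T_{uv,u})}X_s$ and $\bigcup_{s\in V(T_{uv,v})}X_s$, where $T_{uv,u},T_{uv,v}$ are the components of $T-uv$ containing $u,v$. The torso $H_t$ at $t$ is $G$ if $|V(T)|=1$, and otherwise is obtained from $G$ by consolidating each $Z_i$ into a single vertex $z_i$ (replace $Z_i$ by $z_i$ and, for each edge between $Z_i$ and $v\notin Z_i$, add an edge $z_iv$; multi-edges allowed). The 3-center $\widetilde{H_t}$ is obtained from $H_t$ by exhaustively suppressing vertices of $V(H_t)\setminus X_t$ of degree at most 2 (suppressing $v$: delete $v$, and if it had degree exactly 2 add an edge between its two neighbours). The tree-cut width of $\mathcal T$ is $\max(\max_{uv\in E(T)}|\mathrm{adh}_{\mathcal T}(uv)|,\max_{t}|V(\widetilde{H_t})|)$, and $\mathrm{tcw}(G)$ is its minimum over all tree-cut decompositions of $G$. *)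

(* Graphs: a finite simple graph is a symmetric irreflexive
   relation G : rel V on a finType V. Edges are the 2-sets [set x; y] with G x y. *)
From mathcomp Require Import all_boot.
Set Implicit Arguments. Unset Strict Implicit. Unset Printing Implicit Defensive.

Definition del_edge (tT : finType) (tE : rel tT) (a b : tT) : rel tT :=
  [rel x y | tE x y && ([set x; y] != [set a; b])].

(* tT with relation tE is a (nonempty, finite) tree: connected, and every
   edge is a bridge (acyclic) *)
Definition is_tree (tT : finType) (tE : rel tT) : Prop :=
  [/\ 0 < #|tT|, symmetric tE, irreflexive tE,
      (forall a b, connect tE a b) &
      (forall a b, tE a b -> ~~ connect (del_edge tE a b) a b)].

Definition Tminus (tT : finType) (tE : rel tT) (t : tT) : rel tT :=
  [rel a b | [&& tE a b, a != t & b != t]].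

Definition is_tcd (V : finType) (G : rel V) (tT : finType) (tE : rel tT)
    (X : tT -> {set V}) : Prop :=
  [/\ is_tree tE,
      (forall s t, s != t -> [disjoint X s & X t]) &
      \bigcup_(t : tT) X t = [set: V]].

Section TCD.
Variables (V : finType) (G : rel V) (tT : finType) (tE : rel tT)
          (X : tT -> {set V}).

Definition cross (t : tT) : nat :=
  #|[set e : {set V} | [exists x, exists y,
      [&& G x y, e == [set x; y] &
       [exists s1, exists s2,
         [&& x \in X s1, y \in X s2, s1 != t, s2 != t &
             ~~ connect (Tminus tE t) s1 s2]]]]]|.

Definition side (u v : tT) : {set V} :=
  [set x | [exists s, (x \in X s) && connect (del_edge tE u v) u s]].

Definition adh (u v : tT) : nat :=
  #|[set e : {set V} | [exists x, exists y,
      [&& G x y, e == [set x; y], x \in side u v & y \in side v u]]]|.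

(* Vertices of a torso: inl x for x in X t, and inr C for a component C
   (a set of tree nodes) of T - t, standing for the consolidated vertex z_C. *)
Definition TW := (V + {set tT})%type.

Definition compT (t s : tT) : {set tT} :=
  [set r | (r != t) && connect (Tminus tE t) s r].

Definition phi (t : tT) (u : V) : TW :=
  if u \in X t then inl u
  else inr [set r | (r != t) &&
                    [exists s, (u \in X s) && connect (Tminus tE t) s r]].

Definition torso_V (t : tT) : {set TW} :=
  ((fun x => inl x : TW) @: X t) :|:
  ((fun s => inr (compT t s) : TW) @: (~: [set t])).

(* multigraph edges: a multiset of ordered pairs, every undirected edge being
   listed in both orientations (a loop at w appears as (w,w) twice) *)
Definition torso_E (t : tT) : seq (TW * TW) :=
  [seq (phi t p.1, phi t p.2) |
     p <- enum [pred p : V * V | G p.1 p.2] & phi t p.1 != phi t p.2].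

End TCD.

Section Suppress.
Variable W : finType.

(* degree (a loop counts twice) *)
Definition mdeg (E : seq (W * W)) (v : W) : nat := count (fun p => p.1 == v) E.

Definition nbrs (E : seq (W * W)) (v : W) : seq W := [seq p.2 | p <- E & p.1 == v].

Definition suppress (E : seq (W * W)) (v : W) : seq (W * W) :=
  let L := nbrs E v in
  [seq p <- E | (p.1 != v) && (p.2 != v)] ++
  (if (size L == 2) && (v \notin L)
   then [:: (nth v L 0, nth v L 1); (nth v L 1, nth v L 0)] else [::]).

Inductive supp_reach (Xc : {set W}) :
    {set W} -> seq (W * W) -> {set W} -> seq (W * W) -> Prop :=
| sr_refl (S : {set W}) (E : seq (W * W)) : supp_reach Xc S E S E
| sr_step (S : {set W}) (E : seq (W * W)) (v : W) (S' : {set W}) (E' : seq (W * W)) :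
    v \in S -> v \notin Xc -> mdeg E v <= 2 ->
    supp_reach Xc (S :\ v) (suppress E v) S' E' ->
    supp_reach Xc S E S' E'.

Definition supp_terminal (Xc S : {set W}) (E : seq (W * W)) : Prop :=
  forall v, v \in S -> v \notin Xc -> 2 < mdeg E v.

End Suppress.

(* tcw(G) <= k : some tree-cut decomposition has all adhesions <= k and all
   3-centers (every result of exhaustive suppression) of size <= k *)
Definition tcw_le (V : finType) (G : rel V) (k : nat) : Prop :=
  exists (tT : finType) (tE : rel tT) (X : tT -> {set V}),
    [/\ is_tcd G tE X,
        (forall u v, tE u v -> adh G tE X u v <= k) &
        (forall t S E,
            supp_reach ((fun x => inl x : TW V tT) @: X t)
                       (torso_V tE X t) (torso_E G tE X t) S E ->
            supp_terminal ((fun x => inl x : TW V tT) @: X t) S E ->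
            #|S| <= k)].

Definition tcw_is (V : finType) (G : rel V) (k : nat) : Prop :=
  tcw_le G k /\ forall k', tcw_le G k' -> k <= k'.

Definition ecrw_le (alpha : nat) (V : finType) (G : rel V) (m : nat) : Prop :=
  exists (tT : finType) (tE : rel tT) (X : tT -> {set V}),
    [/\ is_tcd G tE X,
        (forall t, #|X t| <= alpha) &
        (forall t, cross G tE X t <= m)].

From mathcomp Require Import all_boot.
From Stdlib Require Import Classical.
Set Implicit Arguments. Unset Strict Implicit. Unset Printing Implicit Defensive.

(* The star decomposition of G^n_k (A in the centre, each B-vertex alone in
   a leaf) has adhesions of size at most n and leaf torsos with two vertices;
   in the centre torso every B-vertex has degree 2 and only neighbours in A,
   so exhaustive suppression leaves exactly A. Hence tcw(G^n_k) <= n.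
   Conversely, let a decomposition have thickness alpha < n. Two vertices
   a_i, a_j then lie in distinct bags p, q; cut the tree at the first edge p x
   of the p-q path. Each of the k vertices b_l = ({a_i, a_j}, l) lies in bag p
   or bag x (at most 2 alpha of them), or on the side of p, where its edge to
   a_j crosses at p, or on the side of x, where its edge to a_i crosses at x.
   So k <= 2 alpha + 2 ecrw, which is unbounded in k. *)


Section TreeEdges.
Variable T : finType.
Implicit Types (e : rel T) (x y p q t a b : T).

Lemma connect_isolated e x y : (forall z, ~~ e x z) -> connect e x y -> y = x.
Proof.
move=> isox /connectP [[|z s]] /=; first by move=> _ ->.
by rewrite (negbTE (isox z)).
Qed.

Lemma del_edge_sym e a b : symmetric e -> symmetric (del_edge e a b).
Proof. by move=> esym x y; rewrite /del_edge /= esym setUC. Qed.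

Lemma path_del_edge e p y x s :
  path e x s -> p \notin x :: s -> path (del_edge e p y) x s.
Proof.
elim: s x => //= z s IHs x /andP [exz es]; rewrite !inE !negb_or.
case/and3P=> px pz ps; rewrite IHs ?inE ?negb_or ?pz // andbT /del_edge /= exz.
apply: contraNneq px => xz_py.
have : p \in [set x; z] by rewrite xz_py !inE eqxx.
by rewrite !inE (negbTE pz) orbF.
Qed.

Lemma connect_first_edge e p q : connect e p q -> p != q ->
  exists2 x, e p x & connect (del_edge e p x) x q.
Proof.
case/connectP=> s /shortenP [[|x s'] /=]; first by move=> _ _ _ ->; rewrite eqxx.
case/andP=> epx es' /andP [p_notin _] _ -> _; exists x => //.
by apply/connectP; exists s' => //; apply: path_del_edge.
Qed.

Lemma connect_Tminus_del_edge e t a b : t \in [set a; b] ->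
  subrel (connect (Tminus e t)) (connect (del_edge e a b)).
Proof.
move=> tab; apply: connect_sub => x y /and3P [exy xt yt]; apply: connect1.
rewrite /del_edge /= exy; apply/eqP => xy_ab; move: tab.
by rewrite -xy_ab !inE ![t == _]eq_sym (negbTE xt) (negbTE yt).
Qed.

End TreeEdges.

Section Crossing.
Variables (V : finType) (G : rel V) (tT : finType) (tE : rel tT) (X : tT -> {set V}).
Hypothesis tE_sym : symmetric tE.

Lemma tcd_bag_fun : is_tcd G tE X -> exists bag : V -> tT, forall x, x \in X (bag x).
Proof.
case=> -[/card_gt0P [t0 _] _ _ _ _] _ cover.
exists (fun x => odflt t0 [pick t | x \in X t]) => x.
case: pickP => //= no_bag; have : x \in \bigcup_t X t by rewrite cover inE.
by case/bigcupP => t _; rewrite no_bag.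
Qed.

Definition crossing_edges (t : tT) : {set {set V}} :=
  [set e : {set V} | [exists x, exists y,
      [&& G x y, e == [set x; y] &
       [exists s1, exists s2,
         [&& x \in X s1, y \in X s2, s1 != t, s2 != t &
             ~~ connect (Tminus tE t) s1 s2]]]]].

Lemma leq_card_cross t (I : finType) (e : I -> {set V}) (A : {set I}) :
  injective e -> e @: A \subset crossing_edges t -> #|A| <= cross G tE X t.
Proof. by move=> inj_e /subset_leq_card; rewrite card_imset. Qed.

(* Removing an endpoint t of the tree edge p x1 separates the two sides of
   that edge, so an edge of G between bags on different sides crosses at t. *)
Lemma crossing_across_del_edge p x1 t x y s1 s2 :
  t \in [set p; x1] -> G x y -> x \in X s1 -> y \in X s2 -> s1 != t -> s2 != t ->
  connect (del_edge tE p x1) p s1 != connect (del_edge tE p x1) p s2 ->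
  [set x; y] \in crossing_edges t.
Proof.
move=> t_px1 Gxy xs1 ys2 s1t s2t sides.
rewrite inE; apply/existsP; exists x; apply/existsP; exists y; rewrite Gxy eqxx /=.
apply/existsP; exists s1; apply/existsP; exists s2; rewrite xs1 ys2 s1t s2t /=.
apply: contra sides => /(connect_Tminus_del_edge t_px1) s1s2.
have Dsym := sym_connect_sym (del_edge_sym p x1 tE_sym).
by rewrite !(Dsym p) (same_connect Dsym s1s2).
Qed.

Lemma adhC (G_sym : symmetric G) u v : adh G tE X u v = adh G tE X v u.
Proof.
suff adh_sub a b : [set e | [exists x, exists y, [&& G x y, e == [set x; y],
    x \in side tE X a b & y \in side tE X b a]]] \subset
  [set e | [exists x, exists y, [&& G x y, e == [set x; y],
    x \in side tE X b a & y \in side tE X a b]]].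
  by apply/eqP; rewrite eqn_leq !subset_leq_card ?adh_sub.
apply/subsetP => e; rewrite !inE => /existsP [x /existsP [y /and4P [Gxy /eqP -> xa yb]]].
by apply/existsP; exists y; apply/existsP; exists x; rewrite G_sym Gxy setUC eqxx xa yb.
Qed.

End Crossing.

Section Suppression.
Variables (W : finType) (Xc : {set W}).

Definition outside_sparse (E : seq (W * W)) : Prop :=
  (forall p, p \in E -> p.1 \notin Xc -> p.2 \in Xc) /\
  (forall z, z \notin Xc -> mdeg E z <= 2).

Lemma suppress_outside_sparse E v :
  outside_sparse E -> v \notin Xc -> outside_sparse (suppress E v).
Proof.
move=> [E_ends E_deg] vXc.
have nbrs_in : {subset nbrs E v <= Xc}.
  by move=> y /mapP [p]; rewrite mem_filter => /andP [/eqP p1v /E_ends] + ->; apply; rewrite p1v.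
rewrite /suppress; set added := (if _ then _ else _).
have added_in : forall p, p \in added -> p.1 \in Xc.
  rewrite /added; case: ifP => // /andP [/eqP size2 _] p.
  have nth_in i : i < 2 -> nth v (nbrs E v) i \in Xc.
    by move=> lti; apply/nbrs_in/mem_nth; rewrite size2.
  by rewrite !inE => /orP [] /eqP ->; apply: nth_in.
split=> [p|z zXc].
  by rewrite mem_cat mem_filter => /orP [/andP [_ /E_ends] | /added_in ->].
rewrite /mdeg count_cat (@eq_in_count _ _ pred0 added); last first.
  by move=> p /added_in p1; apply: contraNF zXc => /eqP <-.
rewrite count_pred0 addn0 count_filter.
by apply: leq_trans (E_deg _ zXc); apply: sub_count => p /andP [].
Qed.

Lemma supp_reach_outside_sparse S E S' E' :
  supp_reach Xc S E S' E' -> outside_sparse E -> outside_sparse E'.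
Proof.
by elim=> // S0 E0 v S1 E1 _ vXc _ _ IH sparse0; apply/IH/suppress_outside_sparse.
Qed.

Lemma supp_terminal_outside_sparse S E :
  outside_sparse E -> supp_terminal Xc S E -> S \subset Xc.
Proof.
move=> [_ E_deg] terminal; apply/subsetP => v vS; apply/negPn/negP => vXc.
by have := terminal v vS vXc; rewrite ltnNge E_deg.
Qed.

Lemma supp_reach_subset S E S' E' : supp_reach Xc S E S' E' -> S' \subset S.
Proof.
elim=> [S0 E0|S0 E0 v S1 E1 _ _ _ _ IH]; first exact: subxx.
exact: subset_trans IH (subD1set S0 v).
Qed.

End Suppression.

Section GraphGnk.
Variables n k : nat.

(* B-vertices are indexed by ordered pairs (i, j), i = j allowed, instead of
   2-subsets W of A: this graph contains G^n_k, and both bounds below are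
   proved for it directly. *)
Definition Bvert := ('I_n * 'I_n * 'I_k)%type.
Definition Gvert := ('I_n + Bvert)%type.

Definition incident (i : 'I_n) (w : Bvert) : bool := (i == w.1.1) || (i == w.1.2).

Definition Gnk : rel Gvert := fun x y =>
  match x, y with
  | inl i, inr w | inr w, inl i => incident i w
  | _, _ => false
  end.

Lemma Gnk_sym : symmetric Gnk. Proof. by case=> [?|?] [?|?]. Qed.
Lemma Gnk_irr : irreflexive Gnk. Proof. by case. Qed.

Definition star_edge : rel (option Bvert) := fun a b =>
  match a, b with Some _, None | None, Some _ => true | _, _ => false end.

Definition star_bag (t : option Bvert) : {set Gvert} :=
  if t is Some w then [set inr w] else [set inl i | i : 'I_n].

Lemma star_edge_sym : symmetric star_edge. Proof. by case=> [?|] [?|]. Qed.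

Lemma connect_star_centre a : connect star_edge a None.
Proof. by case: a => [w|]; [apply: connect1 | apply: connect0]. Qed.

Lemma del_star_edge_isolated w a b : [set a; b] = [set Some w; None] ->
  forall z, ~~ del_edge star_edge a b (Some w) z.
Proof. by move=> ab [w'|] //=; rewrite /del_edge /= ab eqxx. Qed.

Lemma star_is_tree : is_tree star_edge.
Proof.
split=> [|||a b|].
- by apply/card_gt0P; exists None.
- exact: star_edge_sym.
- by case.
- apply: connect_trans (connect_star_centre a) _.
  by rewrite (sym_connect_sym star_edge_sym) connect_star_centre.
- case=> [w1|] [w2|] //= _.
    by apply/negP => /(connect_isolated (del_star_edge_isolated (erefl _))).
  rewrite (sym_connect_sym (del_edge_sym _ _ star_edge_sym)).
  by apply/negP => /(connect_isolated (del_star_edge_isolated (setUC _ _))).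
Qed.

Lemma star_is_tcd : is_tcd Gnk star_edge star_bag.
Proof.
split; first exact: star_is_tree.
- case=> [w1|] [w2|] //= w12.
  + by rewrite disjoints1 inE; apply: contra w12 => /eqP [->].
  + by rewrite disjoints1; apply/imsetP => -[].
  + by rewrite disjoint_sym disjoints1; apply/imsetP => -[].
- apply/setP => x; rewrite in_setT; apply/bigcupP.
  case: x => [i|w]; first by exists None => //; apply: imset_f.
  by exists (Some w) => //; rewrite /= inE.
Qed.

Lemma side_star_leaf w : side star_edge star_bag (Some w) None \subset [set inr w].
Proof.
apply/subsetP => x; rewrite inE => /existsP [s /andP [xs]].
by move/(connect_isolated (del_star_edge_isolated (erefl _))) => s_w; rewrite s_w in xs.
Qed.

Lemma adh_star_le u v : star_edge u v -> adh Gnk star_edge star_bag u v <= n.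
Proof.
wlog [w -> ->] : u v / exists2 w, u = Some w & v = None.
  move=> leaf_case; case: u v => [w|] [w'|] // _.
    by apply: leaf_case => //; exists w.
  by rewrite (adhC _ _ Gnk_sym); apply: leaf_case => //; exists w'.
move=> _; apply: (@leq_trans #|[set ([set inr w; inl i] : {set Gvert}) | i : 'I_n]|).
  apply: subset_leq_card; apply/subsetP => e; rewrite inE.
  case/existsP => x /existsP [y /and4P [Gxy /eqP -> /(subsetP (side_star_leaf w)) xw _]].
  move: xw Gxy; rewrite inE => /eqP ->; case: y => // i _.
  by apply/imsetP; exists i.
by apply: leq_trans (leq_imset_card _ _) _; rewrite card_ord.
Qed.

Lemma connect_star_minus_leaf w a b : a != Some w -> b != Some w ->
  connect (Tminus star_edge (Some w)) a b.
Proof.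
have to_centre c : c != Some w -> connect (Tminus star_edge (Some w)) c None.
  by case: c => [w1|] cw; [apply: connect1; rewrite /Tminus /= cw | apply: connect0].
move=> aw bw; apply: connect_trans (to_centre _ aw) _.
rewrite (sym_connect_sym (T := option Bvert)) ?to_centre //.
by move=> x y; rewrite /Tminus /= star_edge_sym [(y != _) && _]andbC.
Qed.

Let TWs := TW Gvert (option Bvert).

Lemma torso_V_star_leaf w : torso_V star_edge star_bag (Some w) \subset
  [set (inl (inr w) : TWs); inr [set r | r != Some w]].
Proof.
apply/subsetP => x; rewrite /torso_V; case/setUP => /imsetP [y y_in ->].
  by move: y_in; rewrite /= inE => /eqP ->; rewrite !inE eqxx.
rewrite !inE; apply/orP; right; apply/eqP; congr inr.
apply/setP => r; rewrite /compT !inE; case: eqP => //= /eqP rw.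
by apply: connect_star_minus_leaf => //; move: y_in; rewrite !inE.
Qed.

Let centre_core : {set TWs} := (fun x => inl x : TWs) @: star_bag None.

Lemma phi_centre_hub i : phi star_edge star_bag None (inl i) = inl (inl i).
Proof. by rewrite /phi imset_f. Qed.

Lemma phi_centre_leaf w : phi star_edge star_bag None (inr w) =
  inr [set r | (r != None) &&
     [exists s, (inr w \in star_bag s) && connect (Tminus star_edge None) s r]].
Proof. by rewrite /phi ifF //; apply/imsetP => -[]. Qed.

Lemma hub_centre_core i : (inl (inl i) : TWs) \in centre_core.
Proof. exact/imset_f/imset_f. Qed.

Lemma phi_centre_leaf_inj : injective (fun w => phi star_edge star_bag None (inr w)).
Proof.
move=> w1 w2; rewrite !phi_centre_leaf => -[] /setP /(_ (Some w1)); rewrite !inE /=.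
have -> : [exists s, (inr w1 \in star_bag s) &&
                     connect (Tminus star_edge None) s (Some w1)].
  by apply/existsP; exists (Some w1); rewrite /= inE eqxx connect0.
case/esym/existsP => -[w3|]; last by case/andP => /imsetP [].
rewrite /= inE => /andP [/eqP [<-]] /(connect_isolated (x := Some w2)) w2w1.
suff [] : Some w1 = Some w2 by [].
by apply: w2w1 => -[w4|] //; rewrite /Tminus /= andbF.
Qed.

Lemma star_centre_torso_sparse :
  outside_sparse centre_core (torso_E Gnk star_edge star_bag None).
Proof.
rewrite /torso_E; split=> [p|z z_out].
  case/mapP => -[x y]; rewrite mem_filter mem_enum inE /= => /andP [_ Gxy] ->.
  by case: x y Gxy => [i|w] [j|w'] //= _; rewrite ?phi_centre_hub ?hub_centre_core.
have enum_uniq' : uniq [seq p <- [seq p <- enum [pred p : Gvert * Gvert | Gnk p.1 p.2]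
    | phi star_edge star_bag None p.1 != phi star_edge star_bag None p.2]
    | phi star_edge star_bag None p.1 == z].
  by do 2 apply: filter_uniq; apply: enum_uniq.
rewrite /mdeg count_map -size_filter.
case: (pickP (fun w => phi star_edge star_bag None (inr w) == z)) => [w /eqP wz|no_leaf].
  apply: leq_trans (uniq_leq_size (s2 := [:: (inr w, inl w.1.1); (inr w, inl w.1.2)])
                                  enum_uniq' _) _ => // -[x y].
  rewrite !mem_filter /= => /and4P [/eqP xz _ + _]; rewrite inE /=.
  case: x y xz => [i|w'] [j|w''] //= xz.
    by rewrite -xz phi_centre_hub hub_centre_core in z_out.
  rewrite -wz in xz; rewrite (phi_centre_leaf_inj xz) => /orP [] /eqP ->;
    by rewrite !inE eqxx ?orbT.
apply: leq_trans (uniq_leq_size (s2 := [::]) enum_uniq' _) _ => // -[x y].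
rewrite !mem_filter /= => /and4P [xz _ _ _].
case: x xz => [i|w'] xz; last by rewrite no_leaf in xz.
by rewrite -(eqP xz) phi_centre_hub hub_centre_core in z_out.
Qed.

Lemma tcw_le_Gnk : 1 < n -> tcw_le Gnk n.
Proof.
move=> n_gt1; exists (option Bvert), star_edge, star_bag.
split=> [||[w|] S E reach terminal]; [exact: star_is_tcd | exact: adh_star_le | |].
  apply: leq_trans (subset_leq_card (subset_trans (supp_reach_subset reach)
                                                  (torso_V_star_leaf w))) _.
  by rewrite cards2.
have S_core := supp_terminal_outside_sparse
  (supp_reach_outside_sparse reach star_centre_torso_sparse) terminal.
apply: leq_trans (subset_leq_card S_core) _.
by rewrite card_imset ?card_imset ?card_ord //; move=> ? ? [].
Qed.

End GraphGnk.

Arguments Gnk : clear implicits.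

Section EcrwLowerBound.
Variables (alpha M n K : nat).
Hypothesis alpha_lt_n : alpha < n.
Variables (tT : finType) (tE : rel tT) (X : tT -> {set Gvert n K}).
Hypotheses (tE_tree : is_tree tE) (X_thin : forall t, #|X t| <= alpha)
           (X_cross : forall t, cross (Gnk n K) tE X t <= M).
Variable bag : Gvert n K -> tT.
Hypothesis mem_bag : forall x, x \in X (bag x).

Let leaf_bag (i j : 'I_n) (m : 'I_K) := bag (inr (i, j, m)).

Lemma hubs_split : exists i j : 'I_n, bag (inl i) != bag (inl j).
Proof.
have [/existsP [i /existsP [j ij]]|] := boolP [exists i, exists j, bag (inl i) != bag (inl j)].
  by exists i, j.
rewrite negb_exists => /forallP same_bag; exfalso.
have i0 : 'I_n by exists 0; apply: leq_ltn_trans alpha_lt_n.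
suff : #|[set (inl i : Gvert n K) | i : 'I_n]| <= alpha.
  by rewrite card_imset ?card_ord; [rewrite leqNgt alpha_lt_n | apply: inl_inj].
apply: leq_trans (X_thin (bag (inl i0))).
apply/subset_leq_card/subsetP => _ /imsetP [i _ ->].
move: (same_bag i); rewrite negb_exists => /forallP /(_ i0); rewrite negbK => /eqP <-.
exact: mem_bag.
Qed.

Lemma card_leaves_in_bag i j t : #|[set m | leaf_bag i j m == t]| <= alpha.
Proof.
apply: leq_trans (X_thin t).
rewrite -(card_imset _ (f := fun m => inr (i, j, m) : Gvert n K)); last by move=> ? ? [].
apply/subset_leq_card/subsetP => x /imsetP [m]; rewrite inE => /eqP <- ->.
exact: mem_bag.
Qed.

Lemma card_leaves_across_le i j c p x1 t :
  (c == i) || (c == j) -> t \in [set p; x1] -> bag (inl c) != t ->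
  #|[set m | (leaf_bag i j m != t) &&
     (connect (del_edge tE p x1) p (leaf_bag i j m) !=
      connect (del_edge tE p x1) p (bag (inl c)))]| <= M.
Proof.
move=> c_ij t_px1 ct; apply: leq_trans (X_cross t).
have [_ tE_sym _ _ _] := tE_tree.
apply: (leq_card_cross (e := fun m => [set inr (i, j, m); inl c])).
  by move=> m1 m2 /setP /(_ (inr (i, j, m1))); rewrite !inE eqxx /= orbF => /esym /eqP [].
apply/subsetP => e /imsetP [m]; rewrite inE => /andP [mt across] ->.
by apply: crossing_across_del_edge t_px1 _ (mem_bag _) (mem_bag _) mt ct across.
Qed.

Lemma leaves_le_thin_cross : K <= 2 * alpha + 2 * M.
Proof.
have [i [j pq]] := hubs_split; set p := bag (inl i) in pq *; set q := bag (inl j) in pq *.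
have [_ tE_sym _ tE_conn tE_bridge] := tE_tree.
have [x1 px1 x1q] := connect_first_edge (tE_conn p q) pq.
set D := del_edge tE p x1 in x1q *.
have Dsym : connect_sym D by apply/sym_connect_sym/del_edge_sym.
have p_x1 : ~~ connect D p x1 := tE_bridge _ _ px1.
have p_q : connect D p q = false.
  by apply: contraNF p_x1 => /connect_trans; apply; rewrite Dsym.
have x1p : x1 != p by apply: contraNneq p_x1 => ->; apply: connect0.
have j_ij : (j == i) || (j == j) by rewrite eqxx orbT.
have i_ij : (i == i) || (i == j) by rewrite eqxx.
have qp : q != p by rewrite eq_sym.
have px1' : p != x1 by rewrite eq_sym.
have := card_leaves_across_le j_ij (set21 p x1) qp.
have := card_leaves_across_le i_ij (set22 p x1) px1'.
have := card_leaves_in_bag i j p; have := card_leaves_in_bag i j x1.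
rewrite -/p -/q -/D p_q connect0.
set Bp := [set m | _ == p]; set Bx1 := [set m | _ == x1].
set Sp := [set m | _ & _ != false]; set Sx1 := [set m | _ & _ != true].
move=> card_Bx1 card_Bp card_Sx1 card_Sp.
have cover : [set: 'I_K] \subset Bp :|: Bx1 :|: Sp :|: Sx1.
  apply/subsetP => m _; rewrite !inE.
  by case: eqP; case: eqP; case: (connect D p (leaf_bag i j m)).
have cardU (A B : {set 'I_K}) : #|A :|: B| <= #|A| + #|B| := (leq_card_setU A B).1.
apply: (@leq_trans #|[set: 'I_K]|); first by rewrite cardsT card_ord.
rewrite !mul2n -!addnn addnA; apply: leq_trans (subset_leq_card cover) _.
apply: leq_trans (cardU _ _) (leq_add _ card_Sx1).
apply: leq_trans (cardU _ _) (leq_add _ card_Sp).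
exact: leq_trans (cardU _ _) (leq_add card_Bp card_Bx1).
Qed.

End EcrwLowerBound.

Lemma ecrw_le_Gnk alpha M n K :
  alpha < n -> ecrw_le alpha (Gnk n K) M -> K <= 2 * alpha + 2 * M.
Proof.
move=> alpha_lt_n [tT [tE [X [tcdX X_thin X_cross]]]].
have [bag mem_bag] := tcd_bag_fun tcdX; case: tcdX => tE_tree _ _.
exact: (leaves_le_thin_cross (M := M) alpha_lt_n tE_tree X_thin X_cross mem_bag).
Qed.

Lemma ecrw_le_mono alpha (V : finType) (G : rel V) m m' :
  m <= m' -> ecrw_le alpha G m -> ecrw_le alpha G m'.
Proof.
move=> le_m [tT [tE [X [tcdX X_thin X_cross]]]]; exists tT, tE, X; split=> // t.
exact: leq_trans (X_cross t) le_m.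
Qed.

Lemma ex_minimal_nat (P : nat -> Prop) c :
  P c -> exists2 k, k <= c & P k /\ forall k', P k' -> k <= k'.
Proof.
elim/ltn_ind: c => c IHc Pc.
have [[k' [lt_k'c Pk']]|no_smaller] := classic (exists k', k' < c /\ P k').
  have [k le_kk' minimal_k] := IHc k' lt_k'c Pk'.
  by exists k => //; apply: leq_trans le_kk' (ltnW lt_k'c).
exists c => //; split=> // k' Pk'; rewrite leqNgt; apply/negP => lt_k'c.
by apply: no_smaller; exists k'.
Qed.

Theorem lemma3p8 (alpha : nat) :
  0 < alpha ->
  ~ exists f : nat -> nat,
      forall (V : finType) (G : rel V),
        symmetric G -> irreflexive G ->
        forall k : nat, tcw_is G k -> ecrw_le alpha G (f k).
Proof.
move=> alpha_gt0 [f f_ecrw].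
pose M := \max_(j < alpha.+2) f j.
pose G := Gnk alpha.+1 (2 * alpha + 2 * M).+1.
have [k le_k tcw_k] := ex_minimal_nat (@tcw_le_Gnk alpha.+1 (2 * alpha + 2 * M).+1 alpha_gt0).
have fk_le_M : f k <= M.
  have lt_k : k < alpha.+2 := le_k.
  exact: (@leq_bigmax_cond _ xpredT (fun j : 'I_alpha.+2 => f j) (Ordinal lt_k)).
have := f_ecrw _ G (@Gnk_sym _ _) (@Gnk_irr _ _) k tcw_k.
by move/(ecrw_le_mono fk_le_M)/(ecrw_le_Gnk (ltnSn alpha)); rewrite ltnn.
Qed.
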